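(* Let $p$ be a prime, $n,m$ positive integers, $0\le s\le n$ an integer, and $F:\mathbb{F}_{p^n}\to\mathbb{F}_{p^m}$ a function. Put $\alpha=p^{2n-m}-p^{n+s-m}$ and $\beta=p^{n+s}+p^{2n-m}-p^{n+s-m}$. Then $F$ is a vectorial $s$-plateaued function if and only if for all $x\in\mathbb{F}_{p^n}$ and $y\in\mathbb{F}_{p^m}$, \[\sum_{a\in\mathbb{F}_{p^n}}\left|\{u\in\mathbb{F}_{p^n} : y=F(u+x-a)-F(u)+F(a)\}\right|=\begin{cases}\alpha & \text{if } y\neq F(x),\\ \beta & \text{if } y=F(x).\end{cases}\]
   Context: $\zeta_p=e^{2\pi i/p}$, $Tr_n(z)=\sum_{i=0}^{n-1}z^{p^i}$ (similarly $Tr_m$). For $b\in\mathbb{F}_{p^m}^*$, $F_b(x)=Tr_m(bF(x))$ with Walsh transform $\widehat{F_b}(a)=\sum_{x\in\mathbb{F}_{p^n}}\zeta_p^{F_b(x)-Tr_n(ax)}$. $F$ is vectorial $s$-plateaued if for every $b\in\mathbb{F}_{p^m}^*$ and every $a\in\mathbb{F}_{p^n}$, $|\widehat{F_b}(a)|\in\{0,p^{(n+s)/2}\}$. *)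

From HB Require Import structures.
From mathcomp Require Import all_boot all_order all_algebra all_field.
Set Implicit Arguments. Unset Strict Implicit. Unset Printing Implicit Defensive.
Import Order.TTheory GRing.Theory Num.Theory.
Local Open Scope ring_scope.

(* zeta_p = e^{2 pi i / p} in the algebraic complex numbers algC:
   p.-root (-1) is the p-th root of -1 of minimal nonnegative argument,
   i.e. e^{i pi / p}; its square is e^{2 pi i / p}. *)
Definition zeta (p : nat) : algC := (p.-root (-1)) ^+ 2.

Definition Tr (K : fieldType) (p n : nat) (z : K) : K :=
  \sum_(i < n) z ^+ (p ^ i)%N.

(* The integer representative in {0,..,p-1} of an element t of the prime
   field of K (t = k%:R); 0 if there is none (never happens for traces). *)
Definition fpval (K : finFieldType) (p : nat) (t : K) : nat :=
  odflt 0%N (omap (@nat_of_ord p) [pick k : 'I_p | (k%:R : K) == t]).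

Definition zpow (K : finFieldType) (p : nat) (t : K) : algC :=
  zeta p ^+ fpval p t.

Definition walsh (K L : finFieldType) (p n m : nat) (F : K -> L)
    (b : L) (a : K) : algC :=
  \sum_(x : K) zeta p ^ ((fpval p (Tr p m (b * F x)))%:Z
                          - (fpval p (Tr p n (a * x)))%:Z).

Definition vec_plateaued (K L : finFieldType) (p n m s : nat) (F : K -> L) :=
  forall b : L, b != 0 -> forall a : K,
    `|walsh p n m F b a| = 0 \/
    `|walsh p n m F b a| = sqrtC ((p%:R : algC) ^+ (n + s)).

(** The additive characters of F_(p^n) and F_(p^m) turn both sides into
    statements about f_b = zeta^(Tr_m(b F)).  The Fourier transform of
    T_b(x) = sum_(a,u) f_b(u + x - a) / f_b(u) * f_b(a) is |W_b|^2 W_b, where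
    W_b is the Walsh transform; since |w| is 0 or sqrt(A) exactly when
    |w|^2 w = A w, Fourier inversion makes F s-plateaued iff
    T_b = p^(n+s) f_b for every b <> 0.  On the other side, orthogonality of
    the characters of F_(p^m) gives p^m N(x, y) = sum_b T_b(x) / zeta^(Tr_m(y b)),
    where N(x, y) is the count in the statement, and T_0 = p^(2n); inverting
    this transform in b turns the values of all T_b(x) into exactly the values
    alpha and beta of N(x, y). *)

From mathcomp Require Import all_boot all_order all_algebra all_field.
From mathcomp Require Import ring.
Set Implicit Arguments. Unset Strict Implicit. Unset Printing Implicit Defensive.
Import Order.TTheory GRing.Theory Num.Theory.
Local Open Scope ring_scope.

Section AdditiveCharacter.
Variables (K : finFieldType) (chi : K -> algC).
Hypotheses (chi0 : chi 0 = 1) (chiD : {morph chi : x y / x + y >-> x * y}).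

Lemma chi_neq0 x : chi x != 0.
Proof.
apply/eqP => chix0; move: chi0; rewrite -(subrr x) chiD chix0 mul0r.
by move/esym/eqP; rewrite oner_eq0.
Qed.

Lemma chiN x : chi (- x) = (chi x)^-1.
Proof.
apply: (mulfI (chi_neq0 x)).
by rewrite -chiD subrr chi0 mulfV ?chi_neq0.
Qed.

Lemma chiB x y : chi (x - y) = chi x / chi y.
Proof. by rewrite chiD chiN. Qed.

Lemma chiMn x n : chi (x *+ n) = chi x ^+ n.
Proof. by elim: n => [|n IHn]; rewrite ?chi0 // mulrS exprS chiD IHn. Qed.

Lemma norm_chi x : `|chi x| = 1.
Proof.
have [q q_pr q_char] := finPcharP K.
apply/eqP; rewrite -(pexpr_eq1 (prime_gt0 q_pr)) // -normrX.
by rewrite -chiMn (mulrn_pchar q_char) chi0 normr1.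
Qed.

Lemma conj_chi x : (chi x)^* = (chi x)^-1.
Proof. by rewrite invC_norm norm_chi expr1n invr1 mul1r. Qed.

Hypothesis chi_nontrivial : exists x0, chi x0 != 1.

Lemma sum_chi : \sum_(z : K) chi z = 0.
Proof.
have [x0 chix0_neq1] := chi_nontrivial.
have shift : chi x0 * \sum_(z : K) chi z = \sum_(z : K) chi z.
  by rewrite mulr_sumr [RHS](reindex_inj (addrI x0)); apply: eq_bigr => z _; rewrite chiD.
have : (chi x0 - 1) * \sum_(z : K) chi z == 0 by rewrite mulrBl mul1r shift subrr.
by rewrite mulf_eq0 subr_eq0 (negbTE chix0_neq1) => /eqP.
Qed.

Lemma sum_chiM c : \sum_(z : K) chi (c * z) = if c == 0 then #|K|%:R else 0.
Proof.
have [->|c_neq0] := eqVneq c 0.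
  by rewrite (eq_bigr (fun _ => 1)) => [|z _]; rewrite ?sumr_const ?mul0r.
rewrite -[RHS]sum_chi; exact/esym/(reindex_inj (mulfI c_neq0)).
Qed.

Lemma fourier_inversion (g : K -> algC) x :
  \sum_(c : K) chi (c * x) * \sum_(z : K) g z / chi (c * z) = #|K|%:R * g x.
Proof.
transitivity (\sum_(z : K) g z * \sum_(c : K) chi ((x - z) * c)).
  under eq_bigr do rewrite mulr_sumr.
  rewrite exchange_big; apply: eq_bigr => z _; rewrite mulr_sumr.
  apply: eq_bigr => c _.
  by rewrite mulrBl chiB [x * c]mulrC [z * c]mulrC mulrCA.
under eq_bigr do rewrite sum_chiM subr_eq0.
rewrite (bigD1 x) //= eqxx mulrC big1 ?addr0 // => z /negbTE.
by rewrite eq_sym => ->; rewrite mulr0.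
Qed.

Lemma fourier_inj (g h : K -> algC) :
  (forall c, \sum_(z : K) g z / chi (c * z) = \sum_(z : K) h z / chi (c * z)) ->
  g =1 h.
Proof.
have card_neq0 : #|K|%:R != 0 :> algC.
  by rewrite pnatr_eq0 -lt0n; apply/card_gt0P; exists 0.
move=> eq_gh x; apply: (mulfI card_neq0); rewrite -!fourier_inversion.
by apply: eq_bigr => c _; rewrite eq_gh.
Qed.

End AdditiveCharacter.

Lemma norm0_or_sqrtC_iff (w a : algC) :
  (`|w| = 0 \/ `|w| = sqrtC a) <-> `|w| ^+ 2 * w = a * w.
Proof.
split=> [[/normr0_eq0 -> | ->] | eq_w]; first by rewrite !mulr0.
  by rewrite sqrtCK.
have [-> | w_neq0] := eqVneq w 0; [left; exact: normr0 | right].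
by rewrite -(mulIf w_neq0 eq_w) exprCK.
Qed.

Section PlateauedCount.
Variables (K L : finFieldType) (chiK : K -> algC) (chiL : L -> algC).
Hypotheses (chiK0 : chiK 0 = 1) (chiKD : {morph chiK : x y / x + y >-> x * y})
  (chiK_nontrivial : exists x0, chiK x0 != 1).
Hypotheses (chiL0 : chiL 0 = 1) (chiLD : {morph chiL : x y / x + y >-> x * y})
  (chiL_nontrivial : exists y0, chiL y0 != 1).
Variables (F : K -> L) (lam : nat).

Definition fchar b x := chiL (b * F x).

Definition walsh_chi b c := \sum_(x : K) fchar b x / chiK (c * x).

Definition corr3 b x :=
  \sum_(a : K) \sum_(u : K) fchar b (u + x - a) / fchar b u * fchar b a.

Definition count3 x y :=
  (\sum_(a : K) #|[set u : K | (y == F (u + x - a) - F u + F a)%R]|)%N.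

Lemma fchar_neq0 b x : fchar b x != 0.
Proof. exact: chi_neq0 chiL0 chiLD _. Qed.

Lemma conj_walsh_chi b c :
  (walsh_chi b c)^* = \sum_(u : K) (fchar b u)^-1 * chiK (c * u).
Proof.
rewrite rmorph_sum; apply: eq_bigr => u _.
rewrite rmorphM fmorphV /= /fchar (conj_chi chiL0 chiLD) (conj_chi chiK0 chiKD).
by rewrite invrK mulrC.
Qed.

Lemma walsh_chi_corr3 b c :
  \sum_(x : K) corr3 b x / chiK (c * x) = `|walsh_chi b c| ^+ 2 * walsh_chi b c.
Proof.
set W := walsh_chi b c.
have shift a u : \sum_(x : K) fchar b (u + x - a) / chiK (c * (u + x - a)) = W.
  by rewrite [RHS](reindex_inj (addrI (u - a))); apply: eq_bigr => x _; rewrite addrAC.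
transitivity (\sum_(a : K) \sum_(u : K)
    W * ((fchar b u)^-1 * chiK (c * u)) * (fchar b a / chiK (c * a))).
  rewrite /corr3; under eq_bigr do rewrite mulr_suml; rewrite exchange_big.
  apply: eq_bigr => a _; under eq_bigr do rewrite mulr_suml; rewrite exchange_big.
  apply: eq_bigr => u _; rewrite -(shift a u) !mulr_suml; apply: eq_bigr => x _.
  rewrite !mulrDr mulrN !chiKD (chiN chiK0 chiKD).
  by field; rewrite fchar_neq0 !(chi_neq0 chiK0 chiKD).
transitivity (W * (\sum_(u : K) (fchar b u)^-1 * chiK (c * u)) *
              \sum_(a : K) fchar b a / chiK (c * a)).
  rewrite mulr_sumr; apply: eq_bigr => a _.
  by rewrite mulr_sumr mulr_suml.
by rewrite normCK conj_walsh_chi.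
Qed.

Lemma corr3_0 x : corr3 0 x = (#|K| ^ 2)%:R.
Proof.
rewrite /corr3 /fchar (eq_bigr (fun _ => #|K|%:R)) => [|a _].
  by rewrite sumr_const -mulrnA mulnn.
rewrite (eq_bigr (fun _ => 1)) ?sumr_const // => u _.
by rewrite !mul0r chiL0 invr1 !mulr1.
Qed.

Lemma count3_fourier x y :
  (#|L| * count3 x y)%:R = \sum_(b : L) corr3 b x / chiL (y * b).
Proof.
rewrite natrM /count3 natr_sum mulr_sumr.
transitivity (\sum_(a : K) \sum_(u : K) \sum_(b : L)
                chiL ((F (u + x - a) - F u + F a - y) * b)).
  apply: eq_bigr => a _; rewrite -sum1_card natr_sum big_mkcond mulr_sumr.
  apply: eq_bigr => u _; rewrite (sum_chiM chiL0 chiLD chiL_nontrivial).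
  by rewrite subr_eq0 inE eq_sym; case: ifP; rewrite ?mulr1 ?mulr0.
under eq_bigr do rewrite exchange_big; rewrite exchange_big.
apply: eq_bigr => b _; rewrite /corr3 mulr_suml; apply: eq_bigr => a _.
rewrite mulr_suml; apply: eq_bigr => u _.
rewrite !mulrDl !mulNr !chiLD !(chiN chiL0 chiLD) /fchar ![_ * b]mulrC.
by field; rewrite !(chi_neq0 chiL0 chiLD).
Qed.

Definition corr3_plateaued b x :=
  if b == 0 then (#|K| ^ 2)%:R else lam%:R * fchar b x.

Lemma corr3_plateaued_fourier x y :
  \sum_(b : L) corr3_plateaued b x / chiL (y * b) + lam%:R =
  (#|K| ^ 2 + lam * #|L| * (y == F x))%:R.
Proof.
have sumL := sum_chiM chiL0 chiLD chiL_nontrivial (F x - y).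
rewrite (bigD1 0) //= mulr0 chiL0 in sumL.
rewrite (bigD1 0) //= /corr3_plateaued eqxx mulr0 chiL0 divr1 -addrA.
rewrite (eq_bigr (fun b => lam%:R * chiL ((F x - y) * b))) => [|b /negbTE ->].
  rewrite -mulr_sumr -{2}[lam%:R]mulr1 -mulrDr [_ + 1]addrC sumL subr_eq0 eq_sym.
  by case: eqP => _; rewrite ?muln1 ?muln0 ?addn0 ?mulr0 ?addr0 ?natrD ?natrM.
by rewrite /fchar mulrBl (chiB chiL0 chiLD) mulrA [F x * b]mulrC.
Qed.

Lemma walsh_plateau_iff_corr3 b :
  (forall c, `|walsh_chi b c| = 0 \/ `|walsh_chi b c| = sqrtC lam%:R) <->
  (forall x, corr3 b x = lam%:R * fchar b x).
Proof.
have walsh_lam c :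
    \sum_(x : K) lam%:R * fchar b x / chiK (c * x) = lam%:R * walsh_chi b c.
  by rewrite mulr_sumr; apply: eq_bigr => x _; rewrite mulrA.
split=> [plateau | eq_corr3 c].
  apply: (fourier_inj chiK0 chiKD chiK_nontrivial) => c.
  by rewrite walsh_chi_corr3 walsh_lam; apply/norm0_or_sqrtC_iff.
apply/norm0_or_sqrtC_iff.
rewrite -walsh_chi_corr3 -walsh_lam; apply: eq_bigr => x _.
by rewrite eq_corr3.
Qed.

Lemma count3_iff_corr3 x :
  (forall y, (#|L| * count3 x y + lam = #|K| ^ 2 + lam * #|L| * (y == F x))%N) <->
  (forall b, corr3 b x = corr3_plateaued b x).
Proof.
have count_eq y :
    (#|L| * count3 x y + lam = #|K| ^ 2 + lam * #|L| * (y == F x))%N <->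
    \sum_(b : L) corr3 b x / chiL (y * b) =
    \sum_(b : L) corr3_plateaued b x / chiL (y * b).
  rewrite (rwP eqP) -(eqr_nat algC) natrD count3_fourier.
  by rewrite -corr3_plateaued_fourier (inj_eq (addIr _)); split=> /eqP.
split=> [count_eqs | eq_corr3 y].
  apply: (@fourier_inj L chiL chiL0 chiLD chiL_nontrivial (corr3^~ x)
                       (corr3_plateaued^~ x)) => y.
  exact/count_eq/count_eqs.
by apply/count_eq; apply: eq_bigr => b _; rewrite eq_corr3.
Qed.

Theorem plateaued_iff_count3 :
  (forall b, b != 0 -> forall c,
     `|walsh_chi b c| = 0 \/ `|walsh_chi b c| = sqrtC lam%:R) <->
  (forall x y, (#|L| * count3 x y + lam = #|K| ^ 2 + lam * #|L| * (y == F x))%N).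
Proof.
split=> [plateau x | count_eqs b b_neq0].
  apply/count3_iff_corr3 => b; rewrite /corr3_plateaued.
  have [->|b_neq0] := eqVneq b 0; first exact: corr3_0.
  exact: (walsh_plateau_iff_corr3 b).1 (plateau b b_neq0) x.
apply/walsh_plateau_iff_corr3 => x.
have := (count3_iff_corr3 x).1 (count_eqs x) b.
by rewrite /corr3_plateaued (negbTE b_neq0).
Qed.

End PlateauedCount.

Lemma eqr_nat_pchar (R : nzRingType) p i j : p \in [pchar R] ->
  (i%:R == j%:R :> R) = (i == j %[mod p]).
Proof.
move=> charRp; wlog le_ij : i j / (i <= j)%N.
  by move=> IH; case/orP: (leq_total i j) => /IH //; rewrite eq_sym [RHS]eq_sym.
by rewrite eq_sym [RHS]eq_sym eqn_mod_dvd // (dvdn_pcharf charRp) natrB // subr_eq0.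
Qed.

Lemma zeta_prim p : prime p -> p.-primitive_root (zeta p).
Proof.
move=> p_pr; have p_gt1 := prime_gt1 p_pr; have p_gt0 := ltnW p_gt1.
rewrite /zeta; set r := p.-root (-1).
have r_p : r ^+ p = -1 by rewrite rootCK.
have zeta_p : (r ^+ 2) ^+ p = 1 by rewrite exprAC r_p sqrrN expr1n.
(* r is not 1 as r^p = -1, and not -1 as the principal root is never negative. *)
have zeta_neq1 : r ^+ 2 != 1.
  rewrite sqrf_eq1 negb_or; apply/andP; split; apply/eqP => r_pm1.
    by move: r_p; rewrite r_pm1 expr1n => /eqP; rewrite -addr_eq0 (pnatr_eq0 _ 2).
  by have := rootC_lt0 (-1 : algC) p_gt1; rewrite -/r r_pm1 oppr_lt0 ltr01.
have [q q_prim q_dvd_p] := prim_order_exists p_gt0 zeta_p.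
suff <- : q = p by [].
apply/(prime_nt_dvdP p_pr) => //; apply: contra_neq zeta_neq1 => q1.
by move: (prim_expr_order q_prim); rewrite q1 expr1.
Qed.

Section TraceCharacter.
Variables (p k : nat) (K : finFieldType).
Hypotheses (p_pr : prime p) (cardK : #|K| = (p ^ k)%N).

Let charK : p \in [pchar K] := card_finPcharP cardK p_pr.

Lemma natr_pFrobenius_fixed (t : K) : t ^+ p = t -> exists i, t = i%:R.
Proof.
move=> t_fixed; have [i /eqP -> | t_new] := pickP (fun i : 'I_p => t == i%:R).
  by exists i.
(* Otherwise t, 0, 1, ..., p - 1 would be p + 1 distinct roots of X^p - X. *)
pose P : {poly K} := 'X^p - 'X.
have size_P : size P = p.+1.
  by rewrite size_polyDl ?size_polyXn // size_polyN size_polyX ltnS prime_gt1.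
have root_P z : z ^+ p = z -> root P z by rewrite rootE !hornerE => ->; rewrite subrr.
pose rs := t :: [seq (val i)%:R | i : 'I_p].
have P_neq0 : P != 0 by rewrite -size_poly_eq0 size_P.
have rs_roots : all (root P) rs.
  rewrite /= root_P //=; apply/allP => _ /mapP [i _ ->]; apply: root_P.
  by rewrite -(pFrobenius_autE charK) pFrobenius_aut_nat.
have rs_uniq : uniq rs.
  rewrite /= map_inj_uniq ?enum_uniq ?andbT.
    by apply/mapP => -[i _ /eqP]; rewrite t_new.
  move=> i j /eqP; rewrite (eqr_nat_pchar _ _ charK) !modn_small //.
  by move=> /eqP /val_inj.
have := max_poly_roots P_neq0 rs_roots rs_uniq.
by rewrite size_P /= size_map size_enum_ord ltnn.
Qed.

Lemma fpval_natr i : fpval p (i%:R : K) = (i %% p)%N.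
Proof.
rewrite /fpval; case: pickP => [j /= | /(_ (Ordinal (ltn_pmod i (prime_gt0 p_pr))))].
  by rewrite (eqr_nat_pchar _ _ charK) (modn_small (ltn_ord j)) => /eqP.
by rewrite /= (GRing.natr_mod_pchar charK) eqxx.
Qed.

Lemma zpow_natr i : zpow p (i%:R : K) = zeta p ^+ i.
Proof. by rewrite /zpow fpval_natr (prim_expr_mod (zeta_prim p_pr)). Qed.

Lemma TrD (x y : K) : Tr p k (x + y) = Tr p k x + Tr p k y.
Proof.
rewrite -big_split; apply: eq_bigr => i _.
by rewrite exprDn_pchar // (eq_pnat _ (pcharf_eq charK)) pnatX pnat_id.
Qed.

Lemma Tr_pFrobenius (x : K) : Tr p k x ^+ p = Tr p k x.
Proof.
(* Frobenius shifts the summands x^(p^i) cyclically, since x^(p^k) = x. *)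
rewrite -(pFrobenius_autE charK) rmorph_sum /=.
under eq_bigr do rewrite pFrobenius_autE -exprM -expnSr.
have : \sum_(i < k.+1) x ^+ (p ^ i) = \sum_(i < k.+1) x ^+ (p ^ i) by [].
rewrite {1}big_ord_recl big_ord_recr /= expn0 expr1 -cardK expf_card addrC.
move/addrI; rewrite /Tr => <-; apply: eq_bigr => i _.
by rewrite /bump leq0n add1n.
Qed.

Lemma Tr_natr (x : K) : exists i, Tr p k x = i%:R.
Proof. exact/natr_pFrobenius_fixed/Tr_pFrobenius. Qed.

Lemma Tr_neq0 : exists x : K, Tr p k x != 0.
Proof.
have [x Trx_neq0 | Tr0] := pickP (fun x : K => Tr p k x != 0); first by exists x.
have [d def_k] : exists d, k = d.+1.
  by move: (card_finNzRing_gt1 K); rewrite cardK; case: (k) => // d _; exists d.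
have p_gt1 := prime_gt1 p_pr.
(* Tr would be a nonzero polynomial of degree p^(k-1) < #|K| vanishing on K. *)
pose P : {poly K} := \sum_(i < k) 'X^(p ^ i).
have size_P : size P = (p ^ d).+1.
  rewrite /P def_k big_ord_recr /= addrC size_polyDl size_polyXn //.
  rewrite ltnS; apply: leq_trans (size_sum _ _ _) _; apply/bigmax_leqP => i _.
  by rewrite size_polyXn ltn_exp2l.
have P_neq0 : P != 0 by rewrite -size_poly_eq0 size_P.
have roots_P : all (root P) (enum K).
  apply/allP => x _; rewrite rootE horner_sum.
  by rewrite (eq_bigr _ (fun i _ => hornerXn x _)); apply/negbFE/Tr0.
have := max_poly_roots P_neq0 roots_P (enum_uniq K).
by rewrite -cardE cardK size_P ltnS leq_exp2l // def_k ltnn.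
Qed.

Definition trace_char (x : K) : algC := zpow p (Tr p k x).

Lemma trace_char0 : trace_char 0 = 1.
Proof.
have Tr0 : Tr p k (0 : K) = 0 by apply: (addrI (Tr p k 0)); rewrite -TrD !addr0.
by rewrite /trace_char Tr0 -[0 : K]/(0%:R) zpow_natr.
Qed.

Lemma trace_charD : {morph trace_char : x y / x + y >-> x * y}.
Proof.
move=> x y; have [i Tr_x] := Tr_natr x; have [j Tr_y] := Tr_natr y.
by rewrite /trace_char TrD Tr_x Tr_y -natrD !zpow_natr exprD.
Qed.

Lemma trace_char_nontrivial : exists x, trace_char x != 1.
Proof.
have [x Trx_neq0] := Tr_neq0; exists x; have [i Tr_x] := Tr_natr x.
rewrite /trace_char Tr_x zpow_natr -(prim_order_dvd (zeta_prim p_pr)).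
by rewrite (dvdn_pcharf charK) -Tr_x.
Qed.

End TraceCharacter.

Lemma walshE p n m (K L : finFieldType) (F : K -> L) b a : prime p ->
  walsh p n m F b a = walsh_chi (@trace_char p n K) (@trace_char p m L) F b a.
Proof.
move=> p_pr; have zeta_neq0 : zeta p != 0.
  apply/eqP => zeta0; move: (prim_expr_order (zeta_prim p_pr)).
  by rewrite zeta0 expr0n gtn_eqF ?prime_gt0 // => /eqP; rewrite eq_sym oner_eq0.
by apply: eq_bigr => x _; rewrite expfzDr // -exprnN.
Qed.

Lemma count_eq_alpha_beta (p n m s N : nat) (d : bool) : (0 < p)%N ->
  (p ^ m * N + p ^ (n + s) = (p ^ n) ^ 2 + p ^ (n + s) * p ^ m * d)%N <->
  (N%:R : rat) =
    (if ~~ d then (p%:R : rat) ^ (2%:Z * n%:Z - m%:Z)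
                  - (p%:R : rat) ^ (n%:Z + s%:Z - m%:Z)
     else (p%:R : rat) ^ (n%:Z + s%:Z) + (p%:R : rat) ^ (2%:Z * n%:Z - m%:Z)
          - (p%:R : rat) ^ (n%:Z + s%:Z - m%:Z)).
Proof.
move=> p_gt0; set P : rat := p%:R.
have P_neq0 : P != 0 by rewrite pnatr_eq0 -lt0n.
have Pm_neq0 := expf_neq0 m P_neq0.
have zpowB a b : P ^ (a%:Z - b%:Z) = P ^+ a / P ^+ b by rewrite expfzDr // exprnN.
rewrite -PoszM -PoszD !zpowB -[P ^ (n + s)%N]/(P ^+ (n + s)) exprM exprAC.
rewrite (rwP eqP) -(eqr_nat rat) !natrD !natrM !natrX -/P.
split=> [/eqP count_eq | ->]; last by case: d => /=; apply/eqP; field.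
apply: (mulIf Pm_neq0).
rewrite mulrC -(addrK (P ^+ (n + s)) (P ^+ m * N%:R)) count_eq.
by case: d count_eq => /= _; field.
Qed.

Theorem mainTheorem2 (p n m s : nat) (K L : finFieldType) (F : K -> L) :
  prime p -> (0 < n)%N -> (0 < m)%N -> (s <= n)%N ->
  #|K| = (p ^ n)%N -> #|L| = (p ^ m)%N ->
  let alpha : rat := (p%:R : rat) ^ (2%:Z * n%:Z - m%:Z)
                     - (p%:R : rat) ^ (n%:Z + s%:Z - m%:Z) in
  let beta : rat := (p%:R : rat) ^ (n%:Z + s%:Z)
                    + (p%:R : rat) ^ (2%:Z * n%:Z - m%:Z)
                    - (p%:R : rat) ^ (n%:Z + s%:Z - m%:Z) in
  vec_plateaued p n m s F <->
  (forall (x : K) (y : L),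
     ((\sum_(a : K) #|[set u : K | (y == F (u + x - a) - F u + F a)%R]|)%N%:R : rat)
     = (if y != F x then alpha else beta)).
Proof.
move=> p_pr _ _ _ cardK cardL alpha beta.
have := plateaued_iff_count3 (trace_char0 p_pr cardK) (trace_charD p_pr cardK)
  (trace_char_nontrivial p_pr cardK) (trace_char0 p_pr cardL)
  (trace_charD p_pr cardL) (trace_char_nontrivial p_pr cardL) F (p ^ (n + s)).
rewrite cardK cardL => plateaued_iff.
have count_iff N d := count_eq_alpha_beta n m s N d (prime_gt0 p_pr).
split=> [plateau x y | count_eqs b b_neq0 c].
  apply/count_iff; apply: plateaued_iff.1 => b b_neq0 c.
  by rewrite -walshE // natrX; apply: plateau.
rewrite walshE // -natrX; apply: (plateaued_iff.2 _ b b_neq0) => x y.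
exact/count_iff/count_eqs.
Qed.
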